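(* Let $\mathcal{X}\subset\mathbb{R}^n$ be closed convex, $P$ a probability distribution on a sample space $\mathcal{S}$, and for each $s$ let $f(\cdot;s):\mathbb{R}^n\to\mathbb{R}$ be closed convex and subdifferentiable on $\mathcal{X}$; let $F(x)=\mathbb{E}_P[f(x;S)]$ and $\mathcal{X}^\star=\arg\min_{x\in\mathcal{X}}F(x)$. Assume $F$ is easy to optimize: for each $x^\star\in\mathcal{X}^\star$ and $P$-almost all $s$, $\inf_{x\in\mathcal{X}}f(x;s)=f(x^\star;s)$. Suppose models $f_x(\cdot;s)$ ($x\in\mathcal{X}$, $s\in\mathcal{S}$) satisfy (C.i) $y\mapsto f_x(y;s)$ is convex and subdifferentiable on $\mathcal{X}$; (C.ii) $f_x(x;s)=f(x;s)$ and $f_x(y;s)\le f(y;s)$ for all $y$; (C.iii) $f_x(y;s)\ge\inf_{z\in\mathcal{X}}f(z;s)$ for all $y$ and all $s$. Let $x_1\in\mathcal{X}$, $\alpha_k>0$, $S_1,S_2,\ldots$ i.i.d. $\sim P$, and $x_{k+1}=\arg\min_{x\in\mathcal{X}}\{f_{x_k}(x;S_k)+\frac{1}{2\alpha_k}\|x-x_k\|_2^2\}$. Then for any $x^\star\in\mathcal{X}^\star$, $$\tfrac12\|x_{k+1}-x^\star\|_2^2\le\tfrac12\|x_k-x^\star\|_2^2-\tfrac12[f(x_k;S_k)-f(x^\star;S_k)]\min\left\{\alpha_k,\frac{f(x_k;S_k)-f(x^\star;S_k)}{\|f'(x_k;S_k)\|_2^2}\right\}.$$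
   Context: $f'(x_k;S_k)$ denotes an element of the subdifferential $\partial f(x_k;S_k)$. When $f(x_k;S_k)=f(x^\star;S_k)$ the subtracted term is $0$. *)

From HB Require Import structures.
From mathcomp Require Import all_boot all_order all_algebra.
From mathcomp Require Import all_classical all_reals all_analysis.
Set Implicit Arguments. Unset Strict Implicit. Unset Printing Implicit Defensive.
Import Order.TTheory GRing.Theory Num.Theory.
Import numFieldNormedType.Exports.
Local Open Scope classical_set_scope.
Local Open Scope ring_scope.

Definition dotv (R : realType) (n : nat) (u v : 'rV[R]_n) : R :=
  \sum_(i < n) u ord0 i * v ord0 i.
Definition sqnorm (R : realType) (n : nat) (u : 'rV[R]_n) : R := dotv u u.

Definition convex_setv (R : realType) (n : nat) (X : set 'rV[R]_n) : Prop :=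
  forall x y (t : R), X x -> X y -> 0 <= t <= 1 ->
    X (t *: x + (1 - t) *: y).

(* convex function R^n -> R (real-valued, hence automatically closed) *)
Definition convex_fun (R : realType) (n : nat) (h : 'rV[R]_n -> R) : Prop :=
  forall x y (t : R), 0 <= t <= 1 ->
    h (t *: x + (1 - t) *: y) <= t * h x + (1 - t) * h y.

Definition subgrad (R : realType) (n : nat) (h : 'rV[R]_n -> R) (x g : 'rV[R]_n)
  : Prop := forall y, h x + dotv g (y - x) <= h y.

Definition subdifferentiable_on (R : realType) (n : nat) (h : 'rV[R]_n -> R)
  (X : set 'rV[R]_n) : Prop := forall x, X x -> exists g, subgrad h x g.

Definition infX (R : realType) (n : nat) (h : 'rV[R]_n -> R) (X : set 'rV[R]_n)
  : \bar R := ereal_inf [set (h z)%:E | z in X].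

Definition is_argmin (R : realType) (n : nat) (h : 'rV[R]_n -> \bar R)
  (X : set 'rV[R]_n) (x : 'rV[R]_n) : Prop :=
  X x /\ forall y, X y -> (h x <= h y)%E.

Definition is_argminR (R : realType) (n : nat) (h : 'rV[R]_n -> R)
  (X : set 'rV[R]_n) (x : 'rV[R]_n) : Prop :=
  X x /\ forall y, X y -> h x <= h y.

Definition expectedF d (T : measurableType d) (R : realType) (n : nat)
  (P : probability T R) (f : 'rV[R]_n -> T -> R) (x : 'rV[R]_n) : \bar R :=
  (\int[P]_s (f x s)%:E)%E.

Definition mutually_independent d d' (Om : measurableType d) (T : measurableType d')
  (R : realType) (Q : probability Om R) (S : nat -> Om -> T) : Prop :=
  forall (I : seq nat) (A : nat -> set T), uniq I ->
    (forall i, measurable (A i)) ->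
    Q (\big[setI/setT]_(i <- I) (S i @^-1` A i)) =
    (\prod_(i <- I) Q (S i @^-1` A i))%E.

Definition iid_with_law d d' (Om : measurableType d) (T : measurableType d')
  (R : realType) (Q : probability Om R) (P : probability T R)
  (S : nat -> Om -> T) : Prop :=
  (forall k, measurable_fun setT (S k)) /\
  (forall k A, measurable A -> Q (S k @^-1` A) = P A) /\
  mutually_independent Q S.

(** The proximal model step satisfies a variational inequality: the new
  iterate [x'] has [<x' - x, x' - y> <= a (h y - h x')] for every [y] in [X].
  Taking [y = x⋆], expanding [|x' - x⋆|^2] around [x], and using that the
  model [h] lies below [f], agrees with it at [x] and never drops below
  [inf f = f x⋆], the decrease of the squared distance is at least
  [2 mu (h x' - f x⋆) + |x' - x|^2] for every [0 <= mu <= a].  The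
  subgradient inequality at [x] and [|x' - x + mu g|^2 >= 0] bound this from
  below by [mu (2 D - mu |g|^2)], where [D = f x - f x⋆], and this is at
  least [mu D] once [mu |g|^2 <= D].  Since each [S_k] has law [P], almost
  surely no [S_k] falls into the [P]-null set where [inf f(.; s) <> f(x⋆; s)].
*)
From HB Require Import structures.
From mathcomp Require Import all_boot all_order all_algebra.
From mathcomp Require Import all_classical all_reals all_analysis.
From mathcomp Require Import ring lra.
Import Order.TTheory GRing.Theory Num.Theory.
Import numFieldNormedType.Exports.
Local Open Scope classical_set_scope.
Local Open Scope ring_scope.

Lemma ge0_of_small_perturbation (R : realFieldType) (A S : R) : 0 <= S ->
  (forall t, 0 < t -> t <= 1 -> 0 <= A + t * S) -> 0 <= A.
Proof.
move=> S_ge0 perturbed; apply/ler_addgt0Pr => e e_gt0.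
pose t := Num.min 1 (e / (S + 1)).
have t_gt0 : 0 < t by rewrite lt_min ltr01 divr_gt0 // ltr_wpDl.
have t_le1 : t <= 1 by rewrite ge_min lexx.
have tS_le : t * (S + 1) <= e.
  by rewrite -ler_pdivlMr ?ltr_wpDl // ge_min lexx orbT.
by have := perturbed t t_gt0 t_le1; nra.
Qed.

Section Euclidean.
Context {R : realType} {n : nat}.
Implicit Types (u v w : 'rV[R]_n) (a : R).

Lemma dotvC u v : dotv u v = dotv v u.
Proof. by apply: eq_bigr => i _; rewrite mulrC. Qed.

Lemma dotvDl u v w : dotv (u + v) w = dotv u w + dotv v w.
Proof. by rewrite /dotv -big_split; apply: eq_bigr => i _; rewrite mxE mulrDl. Qed.

Lemma dotvNl u w : dotv (- u) w = - dotv u w.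
Proof. by rewrite /dotv -sumrN; apply: eq_bigr => i _; rewrite mxE mulNr. Qed.

Lemma dotvZl a u w : dotv (a *: u) w = a * dotv u w.
Proof. by rewrite /dotv mulr_sumr; apply: eq_bigr => i _; rewrite mxE mulrA. Qed.

Lemma dotvDr u v w : dotv w (u + v) = dotv w u + dotv w v.
Proof. by rewrite dotvC dotvDl !(dotvC w). Qed.

Lemma dotvZr a u w : dotv w (a *: u) = a * dotv w u.
Proof. by rewrite dotvC dotvZl dotvC. Qed.

Lemma sqnorm_ge0 u : 0 <= sqnorm u.
Proof. by apply: sumr_ge0 => i _; rewrite -expr2 sqr_ge0. Qed.

Lemma sqnormD u v : sqnorm (u + v) = sqnorm u + 2 * dotv u v + sqnorm v.
Proof. by rewrite /sqnorm dotvDl !dotvDr (dotvC v u); ring. Qed.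

Lemma sqnormZ a u : sqnorm (a *: u) = a ^+ 2 * sqnorm u.
Proof. by rewrite /sqnorm dotvZl dotvZr mulrA expr2. Qed.

Lemma sqnormB_three_point u v w :
  sqnorm (v - w) = sqnorm (u - w) + 2 * dotv (v - u) (v - w) - sqnorm (v - u).
Proof.
have -> : v - w = (u - w) + (v - u) by rewrite [RHS]addrC addrA subrK.
by rewrite sqnormD [dotv (v - u) _]dotvDr (dotvC (u - w)) /sqnorm; ring.
Qed.

Lemma sqnorm_dotv_lower a u v :
  - (a ^+ 2 * sqnorm u) <= 2 * a * dotv u v + sqnorm v.
Proof.
have := sqnorm_ge0 (v + a *: u).
by rewrite sqnormD sqnormZ dotvZr dotvC; lra.
Qed.

End Euclidean.

Section ProxStep.
Context {R : realType} {n : nat}.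

Lemma prox_variational_ineq {X : set 'rV[R]_n}
    {h : 'rV[R]_n -> R} {a : R} {z xp y : 'rV[R]_n} :
  convex_setv X -> convex_fun h -> 0 < a ->
  is_argminR (fun y => h y + (2 * a)^-1 * sqnorm (y - z)) X xp -> X y ->
  dotv (xp - z) (xp - y) <= a * (h y - h xp).
Proof.
move=> cX ch a_gt0 [Xxp xp_min] Xy.
set d := y - xp; set u := xp - z.
have -> : xp - y = - d by rewrite opprB.
rewrite dotvC dotvNl dotvC.
suff : 0 <= a * (h y - h xp) + dotv u d by lra.
apply: (@ge0_of_small_perturbation _ _ (sqnorm d / 2)).
  by rewrite divr_ge0 ?sqnorm_ge0.
move=> t t_gt0 t_le1.
have t01 : 0 <= t <= 1 by rewrite t_le1 ltW.
have := xp_min _ (cX _ _ _ Xy Xxp t01).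
have -> : t *: y + (1 - t) *: xp - z = u + t *: d.
  by apply/rowP => j; rewrite !mxE; ring.
rewrite -/u [sqnorm (u + _)]sqnormD sqnormZ dotvZr mulrDr.
move=> xp_le; have h_convex := ch y xp t t01.
set q := 2 * (t * dotv u d) + t ^+ 2 * sqnorm d.
have gain : 0 <= t * (h y - h xp) + (2 * a)^-1 * q.
  by rewrite /q; move: xp_le; rewrite mulrDr; lra.
have -> : a * (h y - h xp) + dotv u d + t * (sqnorm d / 2) =
    a * t^-1 * (t * (h y - h xp) + (2 * a)^-1 * q).
  by rewrite /q; field; rewrite !lt0r_neq0.
by rewrite mulr_ge0 // divr_ge0 ?ltW.
Qed.

Lemma subgrad_tight_minorant {h f : 'rV[R]_n -> R} {x g : 'rV[R]_n} :
  (forall y, h y <= f y) -> h x = f x -> subgrad h x g -> subgrad f x g.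
Proof. by move=> h_le h_x g_sub y; rewrite -h_x (le_trans (g_sub y)). Qed.

Lemma prox_step_descent {X : set 'rV[R]_n}
    {f h : 'rV[R]_n -> R} {a : R} {xk xp xs g : 'rV[R]_n} :
  convex_setv X -> convex_fun h -> 0 < a -> X xs ->
  (forall y, h y <= f y) -> h xk = f xk -> subgrad h xk g ->
  (forall y, f xs <= h y) ->
  is_argminR (fun y => h y + (2 * a)^-1 * sqnorm (y - xk)) X xp ->
  let D := f xk - f xs in
  sqnorm (xp - xs) / 2 <= sqnorm (xk - xs) / 2 - D / 2 * Num.min a (D / sqnorm g).
Proof.
move=> cX ch a_gt0 Xxs h_le h_xk g_sub h_ge xp_prox /=.
set D := f xk - f xs.
set G := sqnorm g; set mu := Num.min a (D / G).
have D_ge0 : 0 <= D by rewrite subr_ge0 -h_xk.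
have G_ge0 : 0 <= G by exact: sqnorm_ge0.
have mu_ge0 : 0 <= mu by rewrite le_min ltW // divr_ge0.
have mu_le_a : mu <= a by rewrite ge_min lexx.
have muG_le : mu * G <= D.
  have [->|G_neq0] := eqVneq G 0; first by rewrite mulr0.
  by rewrite -ler_pdivlMr ?lt0r ?G_neq0 // ge_min lexx orbT.
have descent : sqnorm (xp - xs) <=
    sqnorm (xk - xs) - 2 * (a * (h xp - f xs)) - sqnorm (xp - xk).
  have := prox_variational_ineq cX ch a_gt0 xp_prox Xxs.
  have : a * (h xs - f xs) <= 0 by rewrite pmulr_rle0 // subr_le0.
  by rewrite (sqnormB_three_point xk); lra.
have gain_mu_le_a : mu * (h xp - f xs) <= a * (h xp - f xs).
  by rewrite ler_wpM2r // subr_ge0.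
have linearize : mu * (D + dotv g (xp - xk)) <= mu * (h xp - f xs).
  by rewrite ler_wpM2l // /D -h_xk; have := g_sub xp; lra.
have := sqnorm_dotv_lower mu g (xp - xk); rewrite -/G.
have : 0 <= mu * (D - mu * G) by rewrite mulr_ge0 // subr_ge0.
lra.
Qed.

End ProxStep.

Lemma ae_comp_law d d' (Om : measurableType d) (T : measurableType d')
    (R : realType) (Q : {measure set Om -> \bar R}) (P : {measure set T -> \bar R})
    (Y : Om -> T) (A : T -> Prop) :
  measurable_fun setT Y -> (forall B, measurable B -> Q (Y @^-1` B) = P B) ->
  {ae P, forall s, A s} -> {ae Q, forall w, A (Y w)}.
Proof.
move=> Ymeas Ylaw [N [mN PN0 notA_N]]; exists (Y @^-1` N); split.
- by rewrite -[_ @^-1` _]setTI; exact: Ymeas.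
- by rewrite Ylaw.
- by move=> w notA; exact: notA_N.
Qed.

Theorem lemma5 (R : realType) (n : nat)
  (dT : measure_display) (T : measurableType dT) (P : probability T R)
  (dO : measure_display) (Om : measurableType dO) (Q : probability Om R)
  (X : set 'rV[R]_n)
  (f : 'rV[R]_n -> T -> R)
  (fm : 'rV[R]_n -> 'rV[R]_n -> T -> R)
  (alpha : nat -> R) (S : nat -> Om -> T) (x : nat -> Om -> 'rV[R]_n) :
  closed X -> convex_setv X ->
  (forall s, convex_fun (f ^~ s) /\ subdifferentiable_on (f ^~ s) X) ->
  (forall y, X y -> measurable_fun setT (f y)) ->
  (forall y, X y -> P.-integrable setT (fun s => (f y s)%:E)) ->
  (* F is easy to optimize *)
  (forall xs, is_argmin (expectedF P f) X xs ->
     {ae P, forall s, infX (f ^~ s) X = (f xs s)%:E}) ->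
  (* model conditions (C.i)-(C.iii) *)
  (forall z s, X z -> convex_fun (fun y => fm z y s) /\
                      subdifferentiable_on (fun y => fm z y s) X) ->
  (forall z s, X z -> fm z z s = f z s /\ (forall y, fm z y s <= f y s)) ->
  (forall z s, X z -> forall y, infX (f ^~ s) X <= (fm z y s)%:E)%E ->
  (* iteration *)
  (forall w, X (x 0%N w)) ->
  (forall k, 0 < alpha k) ->
  iid_with_law Q P S ->
  (forall k w, is_argminR
     (fun y => fm (x k w) y (S k w) + (2 * alpha k)^-1 * sqnorm (y - x k w))
     X (x k.+1 w)) ->
  forall xs, is_argmin (expectedF P f) X xs ->
  {ae Q, forall w, forall k,
     exists2 g, subgrad (f ^~ (S k w)) (x k w) g &
     let D := f (x k w) (S k w) - f xs (S k w) in
     sqnorm (x k.+1 w - xs) / 2 <=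
       sqnorm (x k w - xs) / 2 - D / 2 * Num.min (alpha k) (D / sqnorm g)}.
Proof.
move=> _ cX _ _ _ easy model_cvx model_tight model_ge x0_in a_gt0 [S_meas [S_law _]]
  x_prox xs xs_min.
have x_in k w : X (x k w) by case: k => [|k]; [exact: x0_in | case: (x_prox k w)].
have typical : {ae Q, forall w k, infX (f ^~ (S k w)) X = (f xs (S k w))%:E}.
  by apply: ae_foralln => k; exact: ae_comp_law (S_meas k) (S_law k) (easy xs xs_min).
apply: filterS typical => w typical_w k.
have [h_cvx /(_ _ (x_in k w)) [g g_sub]] := model_cvx _ (S k w) (x_in k w).
have [h_xk h_le] := model_tight _ (S k w) (x_in k w).
exists g; first exact: subgrad_tight_minorant g_sub.
apply: prox_step_descent cX h_cvx (a_gt0 k) xs_min.1 h_le h_xk g_sub _ (x_prox k w).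
by move=> y; rewrite -lee_fin -typical_w; exact: model_ge.
Qed.
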